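(* Let $\mathbf A$ be a pseudo-Kleene lattice, and define $x\odot y=0$ if $x\leq y'$ and $x\odot y=y\land(x\lor y')$ otherwise; $x\to y=1$ if $x\leq y$ and $x\to y=x'\lor(x\land y)$ otherwise. The following are equivalent: (1) $R(\mathbf A)=(A,\land,\lor,\odot,\to,0,1)$ is a left-residuated $\ell$-groupoid; (2) $\mathbf A$ is super-paraorthomodular and, for all $x,y\in A$, if $x\not\leq y$ then $x\leq y\lor y'$ or $y'\leq x\lor y$.
   Context: A pseudo-Kleene lattice is an algebra $(A,\land,\lor,{}',0,1)$ that is a bounded lattice with an antitone involution ${}'$ ($x\leq y\Rightarrow y'\leq x'$, $x''=x$) satisfying $x\land x'\leq y\lor y'$. It is super-paraorthomodular if for all $x,y$: (SP1) $x\leq y$ and $x'\land y=(x\land x')\lor(y\land y')$ imply $y\land(x\lor x')=x\lor(y\land y')$; (SP2) $x\leq y$ implies $(x\land x')\lor(y\land y')=(x'\land y)\land(x'\land y)'$. A left-residuated $\ell$-groupoid is an algebra $(A,\land,\lor,\odot,\to,0,1)$ such that $(A,\land,\lor,0,1)$ is a bounded lattice, $x\odot 1=x=1\odot x$ for all $x$, and $x\odot y\leq z$ iff $x\leq y\to z$ for all $x,y,z$. *)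

From HB Require Import structures.
From mathcomp Require Import all_boot all_order.
Set Implicit Arguments. Unset Strict Implicit. Unset Printing Implicit Defensive.
Import Order.Theory.
Local Open Scope order_scope.

(* Bounded lattices are MathComp's [tbLatticeType d]; 0 = \bot, 1 = \top,
   /\ = `&`, \/ = `|`.  The unary operation ' is an explicit function c. *)
Section PKL.
Context {d : Order.disp_t} {T : tbLatticeType d} (c : T -> T).

Definition pseudo_kleene : Prop :=
  [/\ (forall x y : T, x <= y -> c y <= c x),
      (forall x : T, c (c x) = x) &
      (forall x y : T, x `&` c x <= y `|` c y)].

Definition super_paraorthomodular : Prop :=
  (forall x y : T, x <= y ->
     c x `&` y = (x `&` c x) `|` (y `&` c y) ->
     y `&` (x `|` c x) = x `|` (y `&` c y)) /\
  (forall x y : T, x <= y ->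
     (x `&` c x) `|` (y `&` c y) = (c x `&` y) `&` c (c x `&` y)).

Definition pk_mul (x y : T) : T :=
  if x <= c y then \bot else y `&` (x `|` c y).
Definition pk_imp (x y : T) : T :=
  if x <= y then \top else c x `|` (x `&` y).

(* (T, meet, join, mul, imp, \bot, \top) is a left-residuated l-groupoid
   (the bounded-lattice part is given by the structure on T) *)
Definition left_residuated_lgroupoid (mul imp : T -> T -> T) : Prop :=
  (forall x : T, mul x \top = x /\ mul \top x = x) /\
  (forall x y z : T, mul x y <= z <-> x <= imp y z).

End PKL.

From HB Require Import structures.
From mathcomp Require Import all_boot all_order.
Import Order.Theory.
Local Open Scope order_scope.

(* Both conditions of the theorem are equivalent to one restricted
   orthomodular law: [z <= b] and [z' </= b] imply [z \/ (b /\ z') = b].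
   Residuation of R(A), unfolded case by case, is exactly this law and its
   dual; the law yields both super-paraorthomodularity axioms; residuation
   forces the dichotomy [x <= y \/ y'] or [y' <= x \/ y]; conversely
   super-paraorthomodularity gives [y /\ (x1 \/ x1') = x1] for
   [x1 = x \/ (x' /\ y)], and the dichotomy upgrades this to [x1 = y]. *)

Ltac lattice := solve [ by [] | exact: lexx | exact: le0x | exact: lex1
  | rewrite lexI; apply/andP; split; lattice
  | rewrite leUx; apply/andP; split; lattice
  | apply: leIxl; lattice | apply: leIxr; lattice
  | apply: lexUl; lattice | apply: lexUr; lattice ].

Section AntitoneInvolution.
Context {d : Order.disp_t} {T : tbLatticeType d} (c : T -> T).
Hypothesis inv_anti : forall {x y : T}, x <= y -> c y <= c x.
Hypothesis invK : forall x : T, c (c x) = x.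

Lemma le_inv2 (x y : T) : (c x <= c y) = (y <= x).
Proof.
apply/idP/idP => [le_c|]; last exact: inv_anti.
by rewrite -(invK x) -(invK y) inv_anti.
Qed.

Lemma invU (x y : T) : c (x `|` y) = c x `&` c y.
Proof.
apply/le_anti/andP; split; first by rewrite lexI !inv_anti ?leUl ?leUr.
by rewrite -le_inv2 invK leUx -le_inv2 invK leIl -le_inv2 invK leIr.
Qed.

Lemma invI (x y : T) : c (x `&` y) = c x `|` c y.
Proof. by rewrite -{1}(invK x) -{1}(invK y) -invU invK. Qed.

Lemma inv1 : c \top = \bot.
Proof. by apply/eqP; rewrite -lex0 -(invK \bot) inv_anti ?lex1. Qed.

Definition pk_residuated : Prop :=
  forall x y z : T, pk_mul c x y <= z <-> x <= pk_imp c y z.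

Definition restricted_orthomodular : Prop :=
  forall z b : T, z <= b -> ~~ (c z <= b) -> z `|` (b `&` c z) = b.

Definition nle_dichotomy : Prop :=
  forall x y : T, ~~ (x <= y) -> x <= y `|` c y \/ c y <= x `|` y.

Lemma restricted_orthomodular_dual : restricted_orthomodular ->
  forall a y : T, a <= y -> ~~ (a <= c y) -> y `&` (a `|` c y) = a.
Proof.
move=> rom a y le_ay nle_a_cy.
have nle : ~~ (c (c y) <= c a) by rewrite invK -le_inv2 invK.
have := rom (c y) (c a) (inv_anti le_ay) nle.
by move/(congr1 c); rewrite invU invI !invK meetC => ->.
Qed.

Lemma pk_mul_unit (x : T) : pk_mul c x \top = x /\ pk_mul c \top x = x.
Proof.
rewrite /pk_mul inv1; split.
  case: ifP => [|_]; last by rewrite meet1x joinx0.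
  by rewrite lex0 => /eqP.
case: ifP => [top_le|_]; last by rewrite join1x meetx1.
have /(congr1 c) : c x = \top by apply/eqP; rewrite eq_le lex1 top_le.
by rewrite invK inv1.
Qed.

Lemma pk_residuated_orthomodular : pk_residuated -> restricted_orthomodular.
Proof.
move=> res z b le_zb nle_cz_b.
apply/le_anti/andP; split; first lattice.
have [le_bz|nle_bz] := boolP (b <= z); first exact: lexUl.
have := (res b (c z) (c z `&` b)).1.
have nle_meet : ~~ (c z <= c z `&` b) by rewrite lexI lexx.
rewrite /pk_mul /pk_imp invK (negbTE nle_bz) (negbTE nle_meet).
move=> /(_ ltac:(lattice)) /le_trans; apply; lattice.
Qed.

Lemma pk_residuated_dichotomy : pk_residuated -> nle_dichotomy.
Proof.
move=> res x y nle_xy.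
have [|nle] := boolP (c y <= x `|` y); [by right | left].
have := (res x (c y) (c y `&` (x `|` y))).1.
have nle_meet : ~~ (c y <= c y `&` (x `|` y)) by rewrite lexI lexx.
rewrite /pk_mul /pk_imp invK (negbTE nle_xy) (negbTE nle_meet).
move=> /(_ (lexx _)) /le_trans; apply; lattice.
Qed.

Lemma orthomodular_pk_residuated :
  restricted_orthomodular -> pk_residuated.
Proof.
move=> rom x y z; rewrite /pk_mul /pk_imp.
have [le_yz|nle_yz] := boolP (y <= z).
  by split=> _; [exact: lex1 | case: ifP => _; [exact: le0x | exact: leIxl]].
have [le_x_cy|nle_x_cy] := boolP (x <= c y).
  by split=> _; [exact: lexUl | exact: le0x].
split=> [mul_le|le_imp].
  have nle_y : ~~ (c (c y) <= x `|` c y).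
    rewrite invK; apply: contra nle_yz => le_y.
    by apply: le_trans mul_le; rewrite lexI lexx.
  have := rom _ _ (leUr (c y) x) nle_y; rewrite invK => join_eq.
  apply: le_trans (leUl x (c y)) _; rewrite -join_eq.
  by rewrite leUx lexUl //= lexUr // lexI leIxr //= meetC.
have nle_yz_cy : ~~ (y `&` z <= c y).
  by apply: contra nle_x_cy => le_cy; apply: le_trans le_imp _; lattice.
have meet_eq := restricted_orthomodular_dual rom _ _ (leIl y z) nle_yz_cy.
apply: (@le_trans _ _ (y `&` ((y `&` z) `|` c y))); last by rewrite meet_eq; lattice.
rewrite lexI leIl /=; apply: leIxr; rewrite leUx joinC le_imp; lattice.
Qed.

Lemma orthomodular_super_paraorthomodular :
  restricted_orthomodular -> super_paraorthomodular c.
Proof.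
move=> rom; split=> x y le_xy; have le_cy_cx := inv_anti le_xy.
  move=> sp1_hyp.
  have ge : x `|` (y `&` c y) <= y `&` (x `|` c x) by lattice.
  apply/le_anti; rewrite ge andbT.
  have [le_cx_y|nle_cx_y] := boolP (c x <= y).
    have le_cy_x : c y <= x by rewrite -(invK x) le_inv2.
    have le_cx_x : c x <= x.
      have : c x <= (x `&` c x) `|` (y `&` c y) by rewrite -sp1_hyp lexI lexx.
      by move/le_trans; apply; lattice.
    by apply: leIxr; rewrite leUx lexUl //= lexUl.
  have := rom _ _ le_xy nle_cx_y; rewrite meetC sp1_hyp => join_eq.
  by apply: leIxl; rewrite -{1}join_eq; lattice.
rewrite invI invK; apply/le_anti/andP; split; first lattice.
have [le_x_cy|nle_x_cy] := boolP (x <= c y).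
  apply: lexUr; rewrite lexI; apply/andP; split; first lattice.
  by apply: leIxr; rewrite leUx le_x_cy lexx.
by rewrite -meetA (restricted_orthomodular_dual rom _ _ le_xy nle_x_cy); lattice.
Qed.

Lemma super_paraorthomodular_meet_join (x y : T) :
  super_paraorthomodular c -> x <= y -> c x `&` y <= x ->
  y `&` (x `|` c x) = x.
Proof.
move=> [sp1 sp2] le_xy le_x.
have le_cy_cx := inv_anti le_xy.
have le_x' : y `&` c y <= x by apply: le_trans le_x; lattice.
rewrite (sp1 _ _ le_xy); first by apply/le_anti; rewrite leUx lexx le_x' leUl.
rewrite sp2 //; apply/le_anti/andP; split; last lattice.
by rewrite lexI lexx invI invK; apply: lexUl.
Qed.

Lemma dichotomy_le_inv : nle_dichotomy -> forall x y : T,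
  x <= y -> ~~ (c x <= y) -> c y <= y -> y <= c x.
Proof.
move=> dich x y le_xy nle_cx_y le_cy_y.
have le_cy_cx := inv_anti le_xy.
have nle : ~~ (c x <= c y) by apply: contra nle_cx_y => /le_trans; apply.
case: (dich _ _ nle) => [le_cx | le_y].
- by move: nle_cx_y; rewrite (le_trans le_cx) // invK; lattice.
- by rewrite invK in le_y; apply: le_trans le_y _; lattice.
Qed.

Lemma super_paraorthomodular_dichotomy_orthomodular :
  super_paraorthomodular c -> nle_dichotomy -> restricted_orthomodular.
Proof.
move=> sp dich x y le_xy nle_cx_y.
rewrite meetC; set x1 := x `|` (c x `&` y).
have le_x1y : x1 <= y by lattice.
have meet_eq : y `&` (x1 `|` c x1) = x1.
  apply: super_paraorthomodular_meet_join => //.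
  rewrite {2}/x1; apply: lexUr; rewrite lexI leIr andbT.
  exact/leIxl/inv_anti/leUl.
apply/le_anti; rewrite le_x1y /=; apply/negPn/negP => nle_y_x1.
case: (dich _ _ nle_y_x1) => [le_y|le_cx1].
  by move: nle_y_x1; rewrite -meet_eq lexI lexx le_y.
have le_cy_y : c y <= y.
  by apply: le_trans (inv_anti le_x1y) (le_trans le_cx1 _); lattice.
have le_y_cx := dichotomy_le_inv dich _ _ le_xy nle_cx_y le_cy_y.
by move: nle_y_x1; rewrite /x1; apply/negP/negPn; apply: lexUr; lattice.
Qed.

End AntitoneInvolution.

Theorem theorem3p11 (d : Order.disp_t) (T : tbLatticeType d) (c : T -> T)
  (hPK : pseudo_kleene c) :
  left_residuated_lgroupoid (pk_mul c) (pk_imp c) <->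
  (super_paraorthomodular c /\
   (forall x y : T, ~~ (x <= y) -> x <= y `|` c y \/ c y <= x `|` y)).
Proof.
case: hPK => inv_anti invK _.
split=> [[_ res] | [sp dich]].
  have rom : restricted_orthomodular c by exact: pk_residuated_orthomodular.
  split; first exact: orthomodular_super_paraorthomodular.
  exact: pk_residuated_dichotomy.
split; first exact: pk_mul_unit.
apply: orthomodular_pk_residuated => //.
exact: super_paraorthomodular_dichotomy_orthomodular.
Qed.
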